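(* Let $t\ge 2$ be an even integer, let $p\ge 3$ be a prime with $p\equiv 1\pmod{t-1}$, and let $n_t=\frac{p(p-1)}{2(t-1)}$. Then $$ex(n_t,n_t,n_t,K_{2,t})\ge \frac{3p(p-1)^2}{4(t-1)}.$$
   Context: $K_{2,t}$ denotes the complete bipartite graph with parts of sizes $2$ and $t$. For an integer $n\ge1$, $ex(n,n,n,K_{2,t})$ is the maximum number of edges in a tripartite graph with three vertex classes each of size $n$ (edges only between different classes) that contains no subgraph isomorphic to $K_{2,t}$. *)

From mathcomp Require Import all_boot all_order.
Set Implicit Arguments. Unset Strict Implicit. Unset Printing Implicit Defensive.

(* Vertices of the tripartite host: class in 'I_3, index in 'I_n. *)
Definition tvert (n : nat) := ('I_3 * 'I_n)%type.

(* A tripartite graph with classes of size n: an irreflexive symmetric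
   adjacency (given as a set of ordered pairs), edges only between
   different classes. *)
Definition tripartite (n : nat) (E : {set tvert n * tvert n}) : bool :=
  [forall u : tvert n, forall v : tvert n,
     ((u, v) \in E) ==> [&& (v, u) \in E & u.1 != v.1]].

Definition nedges (n : nat) (E : {set tvert n * tvert n}) : nat := #|E| %/ 2.

Definition has_K2t (t n : nat) (E : {set tvert n * tvert n}) : bool :=
  [exists a : tvert n, exists b : tvert n, exists T : {set tvert n},
     [&& a != b, #|T| == t, a \notin T, b \notin T &
         [forall x in T, ((a, x) \in E) && ((b, x) \in E)]]].

Definition ex3 (n t : nat) : nat :=
  \max_(E : {set tvert n * tvert n} | tripartite E && ~~ has_K2t t E) nedges E.

From mathcomp Require Import all_boot all_order all_algebra.
From mathcomp Require Import cyclic finfield.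
From mathcomp Require Import ring.
Set Implicit Arguments. Unset Strict Implicit. Unset Printing Implicit Defensive.
Import GRing.Theory.

(* Let F be a field of order 2km + 1 (here F_p) with k = t - 1 odd, let g
   generate F^* and w = g^(2k), of order m.  The vertices of class X in Z/3
   are the pairs (x, i) with x in F and i < m, and (X, x, i) ~ (Y, y, j) iff
   X <> Y and (l(X,Y) x + l(Y,X) y)^k = w^(i+j), where l(X,Y) is 1 if
   Y = X + 1 and g otherwise.  Every vertex has k neighbours for each other
   class and each j, one per k-th root of w^(i+j), which gives
   3|F|m * 2mk / 2 edges.  For a <> b the ratio of the weights of ac and bc is
   a k-th root of w^(i_a - i_b), so at most k = t - 1 vertices c are adjacent
   to both once this ratio is injective.  Since k is odd every edge weight is
   a nonzero square, and a collision c <> c' factors into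
   l(X,Y) s^2 = l(X,Z) s'^2 for distinct classes X, Y, Z; this is impossible
   because exactly one of l(X,Y), l(X,Z) is the non-square g. *)

Definition common_nbhd n (E : {set tvert n * tvert n}) (a b : tvert n) :
    {set tvert n} :=
  [set x | ((a, x) \in E) && ((b, x) \in E)].

Lemma K2t_free_common_nbhd t n (E : {set tvert n * tvert n}) :
  (forall a b, a != b -> #|common_nbhd E a b| < t) -> ~~ has_K2t t E.
Proof.
move=> small; apply/existsP => -[a /existsP[b /existsP[T]]].
case/and5P=> ab /eqP cardT _ _ /forallP TE.
have: T \subset common_nbhd E a b.
  by apply/subsetP => x xT; rewrite inE; have := TE x; rewrite xT.
by move/subset_leq_card; rewrite cardT leqNgt small.
Qed.

Lemma nedges_le_ex3 t n (E : {set tvert n * tvert n}) :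
  tripartite E -> ~~ has_K2t t E -> nedges E <= ex3 n t.
Proof. by move=> trE freeE; apply: leq_bigmax_cond; rewrite trE freeE. Qed.

Section UnityRoots.
Local Open Scope ring_scope.

Lemma card_le_kth_roots (R : idomainType) (T : finType) (S : {set T})
    (f : T -> R) k c :
  (0 < k)%N -> {in S &, injective f} -> {in S, forall x, f x ^+ k = c} ->
  (#|S| <= k)%N.
Proof.
move=> k_gt0 f_inj fS; pose P : {poly R} := 'X^k - c%:P.
have P_neq0 : P != 0 by rewrite -size_poly_eq0 size_XnsubC.
have rootsP : all (root P) (map f (enum S)).
  by apply/allP => r /mapP[x]; rewrite mem_enum => xS ->; rewrite /root !hornerE fS ?subrr.
have uniqP : uniq (map f (enum S)).
  by rewrite map_inj_in_uniq ?enum_uniq // => x y; rewrite !mem_enum; apply: f_inj.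
by have := max_poly_roots P_neq0 rootsP uniqP; rewrite size_map -cardE size_XnsubC.
Qed.

Lemma odd_unity_root_square (R : pzRingType) k (u : R) :
  odd k -> u ^+ k = 1 -> u = (u ^+ k.+1./2) ^+ 2.
Proof.
by move=> k_odd uk; rewrite -exprM muln2 even_halfK /= ?k_odd // exprS uk mulr1.
Qed.

Lemma expf_card_pred (F : finFieldType) (x : F) : x != 0 -> x ^+ #|F|.-1 = 1.
Proof.
move=> x_neq0; apply: (mulIf x_neq0).
by rewrite mul1r -exprSr prednK ?expf_card // ltnW ?finNzRing_gt1.
Qed.

Lemma finField_prim_root (F : finFieldType) :
  exists g : F, (#|F|.-1).-primitive_root g.
Proof.
have: has (#|F|.-1).-primitive_root (enum (predC1 (0 : F))).
  apply: has_prim_root; rewrite ?enum_uniq ?(ltn_predRL, finNzRing_gt1) //.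
    by apply/allP => x; rewrite mem_enum => x_neq0; apply/unity_rootP/expf_card_pred.
  by rewrite -cardE cardC1.
by case/hasP => g _; exists g.
Qed.

End UnityRoots.

Section Construction.
Local Open Scope ring_scope.

Variables (F : finFieldType) (k m : nat) (g : F).
Hypotheses (k_odd : odd k) (card_F : #|F| = (2 * k * m).+1)
  (g_prim : (2 * k * m).-primitive_root g).

Lemma k_gt0 : (0 < k)%N. Proof. by case: k k_odd. Qed.

Lemma m_gt0 : (0 < m)%N.
Proof. by have := prim_order_gt0 g_prim; rewrite muln_gt0 andbC => /andP[]. Qed.

Lemma g_neq0 : g != 0.
Proof. by rewrite (prim_root_eq0 g_prim) -lt0n (prim_order_gt0 g_prim). Qed.

Lemma g_nonsquare (s w : F) : w != 0 -> s ^+ 2 != g * w ^+ 2.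
Proof.
move=> w_neq0; apply/eqP => sq.
have gE : g = (s / w) ^+ 2 by rewrite expr_div_n sq mulfK ?expf_neq0.
have s_neq0 : s != 0.
  by apply: contra_eq_neq sq => ->; rewrite expr0n eq_sym mulf_neq0 ?expf_neq0 ?g_neq0.
have : g ^+ (k * m) == 1.
  rewrite gE -exprM mulnA.
  have -> : (2 * k * m)%N = #|F|.-1 by rewrite card_F.
  by rewrite expf_card_pred // mulf_neq0 ?invr_eq0.
rewrite -(prim_order_dvd g_prim) -mulnA -{2}[(k * m)%N]mul1n.
by rewrite dvdn_pmul2r // muln_gt0 k_gt0 m_gt0.
Qed.

Definition omega : F := g ^+ (2 * k).

Lemma omega_prim : m.-primitive_root omega.
Proof. by have := dvdn_prim_root g_prim (dvdn_mull _ (dvdnn m)); rewrite mulnK ?m_gt0. Qed.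

Lemma omegaX_neq0 e : omega ^+ e != 0.
Proof. by rewrite !expf_neq0 ?g_neq0. Qed.

Lemma omegaXD_inj a i j :
  (i < m)%N -> (j < m)%N -> omega ^+ (a + i) = omega ^+ (a + j) -> i = j.
Proof.
move=> im jm /eqP; rewrite (eq_prim_root_expr omega_prim) eqn_modDl.
by rewrite !modn_small // => /eqP.
Qed.

Lemma omegaX_root_square (v : F) e :
  v ^+ k = omega ^+ e -> exists2 s, s != 0 & v = s ^+ 2.
Proof.
move=> vk; pose c := g ^+ e; have c_neq0 : c != 0 by rewrite expf_neq0 ?g_neq0.
pose u := v / c ^+ 2.
have uk : u ^+ k = 1.
  rewrite expr_div_n vk -exprM /omega /c -!exprM mulnC mulnA divff //.
  by rewrite expf_neq0 ?g_neq0.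
have u_neq0 : u != 0 by move: (oner_neq0 F); rewrite -uk expf_eq0 k_gt0.
exists (c * u ^+ k.+1./2); first by rewrite mulf_neq0 // expf_neq0.
by rewrite exprMn -(odd_unity_root_square k_odd uk) mulrC divfK ?expf_neq0 ?g_neq0.
Qed.

Definition kth_root e q : F := g ^+ (2 * e + 2 * m * q).

Lemma kth_rootX e q : kth_root e q ^+ k = omega ^+ e.
Proof.
rewrite -exprM mulnDl exprD (_ : 2 * m * q * k = 2 * k * m * q)%N; last by ring.
by rewrite [g ^+ (_ * q)]exprM (prim_expr_order g_prim) expr1n mulr1 /omega -!exprM mulnAC.
Qed.

Lemma kth_root_inj e q q' :
  (q < k)%N -> (q' < k)%N -> kth_root e q = kth_root e q' -> q = q'.
Proof.
move=> qk q'k /eqP; rewrite (eq_prim_root_expr g_prim) eqn_modDl.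
rewrite [(2 * k * m)%N]mulnAC -!muln_modr !modn_small // eqn_pmul2l => [/eqP //|].
by rewrite muln_gt0 m_gt0.
Qed.

Definition lam (X Y : 'I_3) : F := if Y == X + 1 then 1 else g.

Lemma lam_neq0 X Y : lam X Y != 0.
Proof. by rewrite /lam; case: ifP; rewrite ?oner_neq0 ?g_neq0. Qed.

Lemma other_classes_succ (X Y Z : 'I_3) :
  X != Y -> X != Z -> Y != Z -> (Y == X + 1) = (Z != X + 1).
Proof. by move: X Y Z; do 3!case=> [[|[|[|?]]] ?]. Qed.

Lemma lam_nonsquare (X Y Z : 'I_3) (s w : F) :
  X != Y -> X != Z -> Y != Z -> s != 0 -> w != 0 ->
  lam X Y * s ^+ 2 != lam X Z * w ^+ 2.
Proof.
move=> XY XZ YZ s_neq0 w_neq0; rewrite /lam (other_classes_succ XY XZ YZ).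
by case: (Z == X + 1); rewrite /= mul1r ?g_nonsquare // eq_sym g_nonsquare.
Qed.

Lemma third_class (X Y Z Z' : 'I_3) :
  X != Z -> X != Z' -> Z != Z' -> Y != Z -> Y != Z' -> X = Y.
Proof.
by move: X Y Z Z'; do 4!case=> [[|[|[|?]]] ?] //=; move=> *; apply: val_inj.
Qed.

Definition vertex := ('I_3 * (F * 'I_m))%type.

Definition wgt (u w : vertex) : F := lam u.1 w.1 * u.2.1 + lam w.1 u.1 * w.2.1.

Definition adj (u w : vertex) : bool :=
  (u.1 != w.1) && (wgt u w ^+ k == omega ^+ (u.2.2 + w.2.2)).

Lemma wgtC u w : wgt u w = wgt w u.
Proof. exact: addrC. Qed.

Lemma adjC u w : adj u w = adj w u.
Proof. by rewrite /adj eq_sym wgtC addnC. Qed.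

Lemma adj_neq_class u w : adj u w -> u.1 != w.1.
Proof. by case/andP. Qed.

Lemma adj_wgt_square u w : adj u w -> exists2 s, s != 0 & wgt u w = s ^+ 2.
Proof. by case/andP=> _ /eqP /omegaX_root_square. Qed.

Lemma wgt_inj_coord u u' c : u.1 = u'.1 -> wgt u c = wgt u' c -> u.2.1 = u'.2.1.
Proof. by rewrite /wgt => <- /addIr /mulfI; apply; apply: lam_neq0. Qed.

Lemma adj_eq u u' c :
  adj u c -> adj u' c -> u.1 = u'.1 -> u.2.1 = u'.2.1 -> u = u'.
Proof.
case: u u' => [X [x i]] [X' [x' i']] /andP[_ /eqP uc] /andP[_ /eqP u'c] /= eX ex.
have ii' : omega ^+ (c.2.2 + i) = omega ^+ (c.2.2 + i').
  by rewrite addnC -uc addnC -u'c /wgt /= eX ex.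
by rewrite eX ex (val_inj (omegaXD_inj (ltn_ord i) (ltn_ord i') ii')).
Qed.

Lemma lam_wgt_neq (X Y Z : 'I_3) u w u' w' :
  X != Y -> X != Z -> Y != Z -> adj u w -> adj u' w' ->
  lam X Y * wgt u w != lam X Z * wgt u' w'.
Proof.
move=> XY XZ YZ /adj_wgt_square[s s_neq0 ->] /adj_wgt_square[s' s'_neq0 ->].
exact: lam_nonsquare.
Qed.

Lemma wgt_cross u u' c c' : c.1 = c'.1 ->
  wgt u c * wgt u' c' - wgt u c' * wgt u' c =
  (c.2.1 - c'.2.1) * (lam c.1 u.1 * wgt u' c' - lam c.1 u'.1 * wgt u c').
Proof. by rewrite /wgt => <-; ring. Qed.

Definition ratio (a b c : vertex) : F := wgt a c / wgt b c.

Lemma adj_wgt_neq0 u w : adj u w -> wgt u w != 0.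
Proof. by case/adj_wgt_square=> s s_neq0 ->; rewrite expf_neq0. Qed.

Lemma ratioX a b c : adj a c -> adj b c ->
  ratio a b c ^+ k = omega ^+ a.2.2 / omega ^+ b.2.2.
Proof.
move=> /andP[_ /eqP ac] /andP[_ /eqP bc].
by rewrite expr_div_n ac bc !exprD invfM mulrACA divff ?mulr1 ?omegaX_neq0.
Qed.

Lemma cross_eq_same_class a b c c' :
  a != b -> adj a c -> adj b c -> adj a c' -> adj b c' -> c.1 = c'.1 ->
  wgt a c * wgt b c' = wgt a c' * wgt b c -> c = c'.
Proof.
move=> ab ac bc ac' bc' cc' /eqP; rewrite -subr_eq0 wgt_cross // mulf_eq0 !subr_eq0.
case/orP => [/eqP xx' | /eqP lamE]; first by apply: (adj_eq (c := a)); rewrite 1?adjC.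
have [ab1 | ab1] := eqVneq a.1 b.1.
  move: lamE; rewrite ab1 => /(mulfI (lam_neq0 _ _)) /esym /(wgt_inj_coord ab1) xab.
  by move: ab; rewrite (adj_eq ac' bc' ab1 xab) eqxx.
have : lam c.1 a.1 * wgt b c' != lam c.1 b.1 * wgt a c'.
  by apply: lam_wgt_neq ab1 bc' ac'; rewrite eq_sym adj_neq_class.
by rewrite lamE eqxx.
Qed.

Lemma cross_neq_diff_class a b c c' :
  a != b -> adj a c -> adj b c -> adj a c' -> adj b c' -> c.1 != c'.1 ->
  wgt a c * wgt b c' != wgt a c' * wgt b c.
Proof.
move=> ab ac bc ac' bc' cc'.
have ab1 : a.1 = b.1 := third_class (adj_neq_class ac) (adj_neq_class ac') cc'
  (adj_neq_class bc) (adj_neq_class bc').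
rewrite -subr_eq0 (wgtC a c) (wgtC b c') (wgtC a c') (wgtC b c) [wgt c' a * _]mulrC.
rewrite wgt_cross // mulf_eq0 !subr_eq0 negb_or; apply/andP; split.
  by apply: contra ab => /eqP xab; rewrite (adj_eq ac bc ab1 xab).
by apply: (lam_wgt_neq (adj_neq_class ac) (adj_neq_class ac') cc'); rewrite adjC.
Qed.

Lemma ratio_inj a b :
  a != b -> {in [pred c | adj a c && adj b c] &, injective (ratio a b)}.
Proof.
move=> ab c c' /andP[ac bc] /andP[ac' bc'] /eqP.
rewrite /ratio eqr_div ?adj_wgt_neq0 // => /eqP cross.
have [cc' | cc'] := eqVneq c.1 c'.1; first exact: cross_eq_same_class cross.
by move/eqP: cross; rewrite (negbTE (cross_neq_diff_class ab ac bc ac' bc' cc')).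
Qed.

Definition nbr_class (X : 'I_3) (s : bool) : 'I_3 := if s then X + 1 else X - 1.

Lemma nbr_class_neq X s : nbr_class X s != X.
Proof. by move: X s; case=> [[|[|[|?]]] ?] []. Qed.

Lemma nbr_class_inj X : injective (nbr_class X).
Proof. by move: X; case=> [[|[|[|?]]] ?] [] [] /eqP. Qed.

Definition nbr (a : vertex) (d : bool * 'I_m * 'I_k) : vertex :=
  let: (s, j, q) := d in
  let B := nbr_class a.1 s in
  (B, ((kth_root (a.2.2 + j) q - lam a.1 B * a.2.1) / lam B a.1, j)).

Lemma wgt_nbr a s j q : wgt a (nbr a (s, j, q)) = kth_root (a.2.2 + j) q.
Proof.
by rewrite /wgt /= [lam (nbr_class _ _) _ * _]mulrC divfK ?lam_neq0 // addrC subrK.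
Qed.

Lemma adj_nbr a d : adj a (nbr a d).
Proof.
by case: d => [[s j] q]; rewrite /adj wgt_nbr kth_rootX eq_sym nbr_class_neq eqxx.
Qed.

Lemma nbr_inj a : injective (nbr a).
Proof.
move=> [[s j] q] [[s' j'] q'] e.
have ss' := nbr_class_inj (congr1 fst e); subst s'.
have jj' : j = j' := congr1 (fun v => v.2.2) e; subst j'.
have := congr1 (wgt a) e; rewrite !wgt_nbr => /kth_root_inj qq'.
by rewrite (val_inj (qq' (ltn_ord q) (ltn_ord q'))).
Qed.

Local Notation n := (#|F| * m)%N.

Lemma card_coords : #|{: F * 'I_m}| = n.
Proof. by rewrite card_prod card_ord. Qed.

Definition decode (u : tvert n) : vertex :=
  (u.1, enum_val (cast_ord (esym card_coords) u.2)).

Definition encode (v : vertex) : tvert n := (v.1, cast_ord card_coords (enum_rank v.2)).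

Lemma encodeK : cancel encode decode.
Proof. by case=> X x; rewrite /decode /encode /= cast_ordK enum_rankK. Qed.

Lemma decodeK : cancel decode encode.
Proof. by case=> X i; rewrite /decode /encode /= enum_valK cast_ordKV. Qed.

Definition graph : {set tvert n * tvert n} := [set e | adj (decode e.1) (decode e.2)].

Lemma graph_tripartite : tripartite graph.
Proof.
apply/forallP => u; apply/forallP => w; apply/implyP; rewrite !inE /= => uw.
by rewrite adjC uw; case/andP: uw.
Qed.

Lemma graph_K2t_free : ~~ has_K2t k.+1 graph.
Proof.
apply: K2t_free_common_nbhd => a b ab; rewrite ltnS.
have dab : decode a != decode b by rewrite (inj_eq (can_inj decodeK)).
apply: (card_le_kth_roots (f := ratio (decode a) (decode b) \o decode)
  (c := omega ^+ (decode a).2.2 / omega ^+ (decode b).2.2) k_gt0).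
  move=> c c'; rewrite !inE /= => cab c'ab /(ratio_inj dab cab c'ab).
  exact: (can_inj decodeK).
by move=> c; rewrite !inE /= => /andP[ac bc]; apply: ratioX.
Qed.

Lemma graph_card : (3 * n * (2 * m * k) <= #|graph|)%N.
Proof.
pose h (d : vertex * (bool * 'I_m * 'I_k)) := (encode d.1, encode (nbr d.1 d.2)).
have h_inj : injective h.
  move=> [a d] [a' d'] /(congr1 (fun e => (decode e.1, decode e.2))) /=.
  by rewrite !encodeK => -[<- /nbr_inj ->].
have <- : #|[set h d | d in {: vertex * (bool * 'I_m * 'I_k)}]| =
          (3 * n * (2 * m * k))%N.
  by rewrite card_imset // !card_prod !card_ord card_bool.
apply/subset_leq_card/subsetP => _ /imsetP[[a d] _ ->].
by rewrite inE /= !encodeK adj_nbr.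
Qed.

Lemma ex3_lower_bound : (3 * #|F| * m ^ 2 * k <= ex3 n k.+1)%N.
Proof.
apply: leq_trans (nedges_le_ex3 graph_tripartite graph_K2t_free).
rewrite /nedges leq_divRL //; apply: leq_trans graph_card.
by rewrite (_ : _ * 2 = 3 * n * (2 * m * k))%N //; ring.
Qed.

End Construction.

Lemma ex3_finField_lower_bound (F : finFieldType) k m :
  odd k -> #|F| = (2 * k * m).+1 -> 3 * #|F| * m ^ 2 * k <= ex3 (#|F| * m) k.+1.
Proof.
move=> k_odd card_F; have [g g_prim] := finField_prim_root F.
rewrite card_F /= in g_prim.
exact: ex3_lower_bound k_odd card_F g_prim.
Qed.

Theorem theorem2 (t p : nat) :
  2 <= t -> ~~ odd t -> prime p -> 3 <= p -> p = 1 %[mod t.-1] ->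
  3 * p * (p.-1) ^ 2 <=
    4 * t.-1 * ex3 (p * p.-1 %/ (2 * t.-1)) t.
Proof.
move=> t_ge2 t_even p_prime p_ge3 p_mod.
set k := t.-1 in p_mod *; have tE : t = k.+1 by rewrite prednK // ltnW.
have k_odd : odd k by move: t_even; rewrite tE negbK.
have dvd_2k : 2 * k %| p.-1.
  have [p2 | p_odd] := even_prime p_prime; first by rewrite p2 in p_ge3.
  rewrite Gauss_dvd ?coprime2n // dvdn2 -subn1 oddB ?prime_gt0 // p_odd /=.
  by rewrite -eqn_mod_dvd ?prime_gt0 //; apply/eqP.
set m := p.-1 %/ (2 * k).
have pm1 : p.-1 = 2 * k * m by rewrite mulnC divnK.
have card_F : #|'F_p| = (2 * k * m).+1 by rewrite card_Fp // -pm1 prednK ?prime_gt0.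
have := ex3_finField_lower_bound k_odd card_F.
rewrite -muln_divA // -/m card_Fp // -tE => /(leq_mul (leqnn (4 * k))).
by apply: leq_trans; apply: eq_leq; rewrite pm1; ring.
Qed.
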